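(* Let $G$ be a finite group and $p$ the smallest prime divisor of $|G|$. If $G'\not\subseteq Z(G)$ and $|G/C_G(G')|=|G'\cap Z(G)|=p$, then $Z(G)^*\subsetneq C_G(G')$ and $C_G(G')/Z(G)^*$ can be embedded in $G'/(G'\cap Z(G))$.
   Context: $G'$ is the commutator subgroup, $Z(G)$ the center, $C_G(G')$ the centralizer of $G'$ in $G$. Commutators are $[x,y]=xyx^{-1}y^{-1}$; for $x\in G$, $[G,x]=\{[y,x]: y\in G\}$; for a subset $H\subseteq G$, $H^*=\{x\in G : [G,x]\subseteq H\}$. Thus $Z(G)^*=\{x\in G: [G,x]\subseteq Z(G)\}$. *)

From mathcomp Require Import all_boot all_fingroup all_solvable.
Set Implicit Arguments. Unset Strict Implicit. Unset Printing Implicit Defensive.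
Local Open Scope group_scope.

(* Paper's commutator convention: [x,y] = x y x^-1 y^-1. *)
Definition pcomm (gT : finGroupType) (x y : gT) : gT := x * y * x^-1 * y^-1.

Definition commset (gT : finGroupType) (G : {set gT}) (x : gT) : {set gT} :=
  [set pcomm y x | y in G].

Definition star (gT : finGroupType) (G H : {set gT}) : {set gT} :=
  [set x in G | commset G x \subset H].

From mathcomp Require Import all_boot all_fingroup all_solvable.
Set Implicit Arguments. Unset Strict Implicit. Unset Printing Implicit Defensive.
Local Open Scope group_scope.

(* star G 'Z(G) is the second centre 'Z_2(G), which centralises G' by the
   three subgroups lemma.  As G / C_G(G') has prime order, C := C_G(G') is a
   maximal subgroup and G' is abelian, hence central in C; therefore every
   commutator of two elements of C lies in Z(G).  Fix g in G outside C.  For x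
   in C the y in G with [x, y] in Z(G) form a subgroup containing C, so by
   maximality x lies in Z_2(G) iff [x, g] lies in Z(G).  Consequently
   x |-> [x, g] (G' :&: Z(G)) is a homomorphism from C into G' / (G' :&: Z(G))
   with kernel Z_2(G); and Z_2(G) = C is impossible, since the same argument
   applied to g itself would put g in Z_2(G). *)

Section SecondCenter.
Variable gT : finGroupType.
Implicit Types (x y c d e : gT) (A G : {group gT}).

Lemma pcommE x y : pcomm x y = [~ y, x^-1] ^ y^-1.
Proof. by rewrite /pcomm /commg /conjg !invgK !mulgA mulgV mul1g. Qed.

Lemma ucn2P G x :
  reflect (x \in G /\ {in G, forall y, [~ x, y] \in 'Z(G)}) (x \in 'Z_2(G)).
Proof.
rewrite ucnSnR ucn1 inE gen_subG; apply: (iffP andP) => -[Gx cxG]; split=> //.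
  by move=> y Gy; apply: (subsetP cxG); rewrite imset2_f ?set11.
by apply/subsetP=> _ /imset2P[_ y /set1P-> Gy ->]; apply: cxG.
Qed.

Lemma star_center G : star G 'Z(G) = 'Z_2(G).
Proof.
have nZG := subsetP (gFnorm _ G : G \subset 'N('Z(G))).
apply/setP=> x; rewrite inE; apply/andP/ucn2P=> -[Gx cxG]; split=> //.
  move=> y Gy; have: pcomm y^-1 x \in 'Z(G).
    by apply: (subsetP cxG); apply/imsetP; exists y^-1; rewrite ?groupV.
  by rewrite pcommE invgK memJ_norm // nZG ?groupV.
apply/subsetP=> _ /imsetP[z Gz ->].
by rewrite pcommE memJ_norm ?cxG ?nZG ?groupV.
Qed.

Lemma ucn2_sub_cent_der G : 'Z_2(G) \subset 'C_G(G^`(1)).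
Proof.
have cZ2GG : [~: 'Z_2(G), G, G] = 1.
  by apply/commG1P; rewrite (subset_trans (ucn_comm 1 G)) // ucn1 subsetIr.
rewrite subsetI ucn_sub centsC; apply/commG1P.
by rewrite three_subgroup // (commGC G).
Qed.

Lemma commgM_center A c x d e :
  c \in A -> x \in A -> d \in 'Z(A) -> e \in 'Z(A) -> [~ c * d, x * e] = [~ c, x].
Proof.
move=> Ac Ax /centerP[Ad cAd] /centerP[Ae cAe].
have fz y z : centralises y A -> z \in A -> z ^ y = z.
  by move=> cAy Az; apply/conjg_fixP/commgP/commute_sym/cAy.
have [cde cdx] : [~ c * d, e] = 1 /\ [~ d, x] = 1.
  by split; apply/eqP/commgP; [apply/commute_sym/cAe/groupM | apply/cAd].
by rewrite commgMJ cde mul1g fz ?groupR ?groupM // commMgJ cdx mulg1 fz ?groupR.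
Qed.

(* Conjugating by y in G multiplies c and x by [~ c, y] and [~ x, y], which
   lie in G', and G' is central in C_G(G') when it is abelian. *)
Lemma commg_cent_der_center G c x :
    abelian G^`(1) -> c \in 'C_G(G^`(1)) -> x \in 'C_G(G^`(1)) ->
  [~ c, x] \in 'Z(G).
Proof.
move=> abG' Cc Cx; have sCG : 'C_G(G^`(1)) \subset G := subsetIl _ _.
have sG'ZC : G^`(1) \subset 'Z('C_G(G^`(1))).
  by rewrite !subsetI der_sub centsC subsetIr andbT; apply: abG'.
have G'R y z : y \in G -> z \in G -> [~ y, z] \in 'Z('C_G(G^`(1))).
  by move=> Gy Gz; rewrite (subsetP sG'ZC) // derg1 mem_commg.
rewrite inE groupR ?(subsetP sCG) //; apply/centP=> y Gy.
apply/commgP; rewrite -conjg_fix; apply/eqP.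
have [Gc Gx] := (subsetP sCG c Cc, subsetP sCG x Cx).
by rewrite conjRg !conjg_mulR (commgM_center Cc Cx) ?G'R.
Qed.

End SecondCenter.

Section MaximalCentralizer.
Variable gT : finGroupType.
Implicit Types (x y : gT) (M H G : {group gT}).

Lemma maximal_sub_eq M H G :
  maximal M G -> M \subset H -> H \subset G -> ~~ (H \subset M) -> H :=: G.
Proof.
case/maxgroupP=> _ maxM sMH sHG; case: (eqVproper sHG) => // prH.
by rewrite (maxM H prH sMH) subxx.
Qed.

(* The preimage in G of the centraliser of x 'Z(G) in G / 'Z(G). *)
Definition cent_modZ G x := [set y in G | [~ x, y] \in 'Z(G)].

Lemma group_set_cent_modZ G x : group_set (cent_modZ G x).
Proof.
apply/group_setP; split=> [|y z]; first by rewrite inE group1 commg1 group1.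
case/setIdP=> Gy xyZ /setIdP[Gz xzZ]; rewrite inE groupM //= commgMJ groupM //.
by rewrite memJ_norm // (subsetP (gFnorm _ G)).
Qed.

Canonical cent_modZ_group G x := group (group_set_cent_modZ G x).

Lemma cent_modZ_sub G x : cent_modZ G x \subset G.
Proof. by apply/subsetP=> y; rewrite inE => /andP[]. Qed.

Lemma mem_ucn2_cent_modZ G x :
  x \in G -> (x \in 'Z_2(G)) = (G \subset cent_modZ G x).
Proof.
move=> Gx; apply/ucn2P/subsetP=> [[_ cxG] y Gy | cxG]; first by rewrite inE Gy cxG.
by split=> // y /cxG; rewrite inE => /andP[].
Qed.

Variables (G : {group gT}) (g : gT).
Hypotheses (maxC : maximal 'C_G(G^`(1)) G) (abG' : abelian G^`(1)).
Hypotheses (Gg : g \in G) (notCg : g \notin 'C_G(G^`(1))).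
Local Notation C := 'C_G(G^`(1)).
Local Notation N := (G^`(1) :&: 'Z(G)).

Let nNG : G \subset 'N(N) := normsI (gFnorm _ G) (gFnorm _ G).

Lemma cent_der_sub_cent_modZ x : x \in C -> C \subset cent_modZ G x.
Proof.
move=> Cx; apply/subsetP=> c Cc; rewrite inE (subsetP (subsetIl _ _) c Cc).
by rewrite commg_cent_der_center.
Qed.

Lemma mem_ucn2_commg x :
  x \in G -> C \subset cent_modZ G x -> (x \in 'Z_2(G)) = ([~ x, g] \in 'Z(G)).
Proof.
move=> Gx sCT; rewrite mem_ucn2_cent_modZ //.
apply/idP/idP=> [/subsetP/(_ g Gg) | xgZ]; first by rewrite inE => /andP[].
rewrite (maximal_sub_eq maxC sCT) ?cent_modZ_sub //.
by apply/subsetPn; exists g; rewrite // inE Gg.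
Qed.

Lemma ucn2_proper_cent_der : 'Z_2(G) \proper C.
Proof.
rewrite properEneq ucn2_sub_cent_der andbT; apply/eqP=> eqZ2C.
suff: g \in 'Z_2(G) by rewrite eqZ2C (negbTE notCg).
rewrite mem_ucn2_commg ?commgg ?group1 //; apply/subsetP=> c.
by rewrite -eqZ2C => /ucn2P[Gc cZG]; rewrite inE Gc -invgR groupV cZG.
Qed.

Lemma mem_commg_der x : x \in G -> [~ x, g] \in G^`(1).
Proof. by move=> Gx; rewrite derg1 mem_commg. Qed.

Definition commg_coset x := coset N [~ x, g].

Lemma commg_coset_morphM : {in C &, {morph commg_coset : x y / x * y}}.
Proof.
move=> x y /setIP[Gx _] /setIP[Gy cG'y]; have G'xg := mem_commg_der Gx.
have fix_y : [~ x, g] ^ y = [~ x, g].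
  by apply/conjg_fixP/commgP/commute_sym/(centP cG'y).
by rewrite /commg_coset commMgJ fix_y morphM // (subsetP nNG) ?groupR.
Qed.

Canonical commg_coset_morphism := Morphism commg_coset_morphM.

Lemma ker_commg_coset : 'ker commg_coset_morphism = 'Z_2(G).
Proof.
apply/setP=> x; apply/idP/idP=> [Kx | Z2x].
  have Cx := dom_ker Kx; have Gx := subsetP (subsetIl _ _) x Cx.
  have /setIP[_ xgZ] : [~ x, g] \in N.
    by apply: coset_idr; [rewrite (subsetP nNG) ?groupR | move: Kx => /(kerP _ Cx)].
  by rewrite mem_ucn2_commg ?cent_der_sub_cent_modZ.
have Cx := subsetP (ucn2_sub_cent_der G) x Z2x; have [Gx _] := setIP Cx.
apply/(kerP _ Cx)/coset_id; rewrite inE mem_commg_der //.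
by case/ucn2P: Z2x => _ ->.
Qed.

Lemma morphim_commg_coset : commg_coset_morphism @* C \subset G^`(1) / N.
Proof.
apply/subsetP=> _ /morphimP[x _ /setIP[Gx _] ->] /=.
by apply: mem_quotient; apply: mem_commg_der.
Qed.

End MaximalCentralizer.

Theorem lemma3p3 (gT : finGroupType) (G : {group gT}) (p : nat) :
  p = pdiv #|G| ->
  ~~ (G^`(1) \subset 'Z(G)) ->
  #|G / 'C_G(G^`(1))| = p ->
  #|G^`(1) :&: 'Z(G)| = p ->
  star G 'Z(G) \proper 'C_G(G^`(1)) /\
  exists f : {morphism 'C_G(G^`(1)) / star G 'Z(G) >-> coset_of (G^`(1) :&: 'Z(G))},
    'injm f /\ f @* ('C_G(G^`(1)) / star G 'Z(G)) \subset G^`(1) / (G^`(1) :&: 'Z(G)).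
Proof.
move=> def_p not_sG'Z cardGC _.
have ntG : 1 < #|G|.
  rewrite ltnNge; apply: contra not_sG'Z => /card_le1_trivg G1.
  by rewrite (subset_trans (der_sub 1 G)) // G1 sub1G.
have p_pr : prime p by rewrite def_p pdiv_prime.
have nCG : G \subset 'N('C_G(G^`(1))) by rewrite normsI ?normG ?norms_cent ?gFnorm.
have maxC : maximal 'C_G(G^`(1)) G.
  by apply: p_index_maximal; rewrite ?subsetIl // -card_quotient ?cardGC.
have abG' : abelian G^`(1).
  rewrite /abelian (subset_trans _ (subsetIr G _)) // der1_min //.
  by rewrite cyclic_abelian ?prime_cyclic ?cardGC.
have [_ [g Gg notCg]] := properP (maxgroupp maxC).
rewrite star_center; split; first exact: ucn2_proper_cent_der maxC Gg notCg.
have [f injf im_f] := first_isom (commg_coset_morphism Gg).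
rewrite -(ker_commg_coset maxC abG' Gg notCg).
by exists f; rewrite im_f morphim_commg_coset.
Qed.
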